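(* Let $n\in\mathbb{N}$ and let $f_1,\ldots,f_n$ be Alpert multiwavelets of multiplicity $n$. Then there is a nonzero real constant $\lambda$ such that, for almost every $x\in[-1,1]$, \[ f_n(x)=\lambda\bigl(A_{n,n}(x)\chi_{[-1,0)}(x)+B_{n,n}(x)\chi_{[0,1)}(x)\bigr), \] where $(A_{n,n},B_{n,n})$ is the type I Legendre–Angelesco multiple orthogonal polynomial for the multi-index $(n,n)$.
   Context: Alpert multiwavelets of multiplicity $n\in\mathbb{N}$: real functions $f_1,\ldots,f_n$ supported on $[-1,1]$ such that (i) the restriction of each $f_i$ to $(0,1)$ is a polynomial of degree at most $n-1$; (ii) $f_k(-t)=(-1)^{k+n-1}f_k(t)$ for $t\in(0,1)$; (iii) $\int_{-1}^1 f_i(t)f_j(t)\,dt=\delta_{i,j}$ for $1\le i,j\le n$; (iv) $\int_{-1}^1 f_k(t)t^i\,dt=0$ for $i=0,1,\ldots,k+n-2$. Type I Legendre–Angelesco polynomials: for integers $n,m\ge 0$ with $n+m\ge1$, $(A_{n,m},B_{n,m})$ is the unique pair of polynomials with $\deg A_{n,m}\le n-1$, $\deg B_{n,m}\le m-1$ (degree $\le -1$ meaning the zero polynomial) such that, writing $Q_{n,m}=A_{n,m}\chi_{[-1,0]}+B_{n,m}\chi_{[0,1]}$, one has $\int_{-1}^1 Q_{n,m}(x)x^k\,dx=0$ for $0\le k\le n+m-2$ and $\int_{-1}^1 Q_{n,m}(x)x^{n+m-1}\,dx=1$. *)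

From Stdlib Require Import Reals.
Open Scope R_scope.

Fixpoint psum (c : nat -> R) (d : nat) (x : R) : R :=
  match d with
  | O => 0
  | S d' => psum c d' x + c d' * x ^ d'
  end.

(* p is a polynomial of degree at most d-1 (d = 0: the zero polynomial). *)
Definition poly_lt (d : nat) (p : R -> R) : Prop :=
  exists c : nat -> R, forall x, p x = psum c d x.

(* The Riemann integral of f over [a,b] exists and equals v
   (RiemannInt does not depend on the integrability proof). *)
Definition has_integral (f : R -> R) (a b v : R) : Prop :=
  exists pr : Riemann_integrable f a b, RiemannInt pr = v.

Definition chi_cc (a b x : R) : R :=
  if Rle_dec a x then (if Rle_dec x b then 1 else 0) else 0.
Definition chi_co (a b x : R) : R :=
  if Rle_dec a x then (if Rlt_dec x b then 1 else 0) else 0.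

Definition alpert (n : nat) (f : nat -> R -> R) : Prop :=
  (forall k, (1 <= k <= n)%nat -> forall x, (x < -1 \/ 1 < x) -> f k x = 0) /\
  (forall k, (1 <= k <= n)%nat ->
     exists p, poly_lt n p /\ forall t, 0 < t < 1 -> f k t = p t) /\
  (forall k, (1 <= k <= n)%nat ->
     forall t, 0 < t < 1 -> f k (- t) = (-1) ^ (k + n - 1) * f k t) /\
  (forall i j, (1 <= i <= n)%nat -> (1 <= j <= n)%nat ->
     has_integral (fun t => f i t * f j t) (-1) 1
       (if Nat.eqb i j then 1 else 0)) /\
  (forall k i, (1 <= k <= n)%nat -> (i + 2 <= k + n)%nat ->
     has_integral (fun t => f k t * t ^ i) (-1) 1 0).

Definition LA_Q (A B : R -> R) (x : R) : R :=
  A x * chi_cc (-1) 0 x + B x * chi_cc 0 1 x.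

Definition typeI_LA (n m : nat) (A B : R -> R) : Prop :=
  poly_lt n A /\ poly_lt m B /\
  (forall k, (k + 2 <= n + m)%nat ->
     has_integral (fun x => LA_Q A B x * x ^ k) (-1) 1 0) /\
  has_integral (fun x => LA_Q A B x * x ^ (n + m - 1)) (-1) 1 1.

(* The last wavelet f_n is a piecewise polynomial of degree < n on (-1,0) and
   (0,1), odd by (ii), whose moments of order 0, ..., 2n-2 vanish by (iv);
   so is the type I function Q_{n,n}.  Both are thus solutions of the same
   homogeneous system of 2n-1 linear equations in 2n unknowns, and this
   system has rank 2n-1: for a piecewise polynomial with coefficients (a, b)
   the k-th moment is sum_i (b_i + (-1)^(i+k) a_i) / (i+k+1), and splitting
   k into even and odd orders gives two Cauchy systems in b_i + (-1)^i a_i and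
   b_i - (-1)^i a_i, which are nonsingular.  Hence f_n = lambda Q_{n,n}, and
   lambda <> 0 because f_n has norm 1. *)
From Stdlib Require Import Reals Lra Lia.
From Coquelicot Require Import Coquelicot.
Open Scope R_scope.

(** * Finite sums and polynomials *)

Fixpoint sum_lt (F : nat -> R) (n : nat) : R :=
  match n with O => 0 | S m => sum_lt F m + F m end.

Lemma sum_lt_ext F G n :
  (forall i, (i < n)%nat -> F i = G i) -> sum_lt F n = sum_lt G n.
Proof.
  induction n as [|n IH]; simpl; intros H; auto.
  rewrite IH by (intros; apply H; lia). rewrite H by lia. auto.
Qed.

Lemma sum_lt_eq0 F n : (forall i, (i < n)%nat -> F i = 0) -> sum_lt F n = 0.
Proof. induction n as [|n IH]; simpl; intros H; auto. rewrite IH, H by (auto; lia). ring. Qed.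

Lemma sum_lt_single F n i0 :
  (i0 < n)%nat -> (forall i, (i < n)%nat -> i <> i0 -> F i = 0) -> sum_lt F n = F i0.
Proof.
  induction n as [|n IH]; simpl; intros Hi0 H0; [lia|].
  destruct (Nat.eq_dec n i0) as [->|Hne].
  - rewrite sum_lt_eq0; [ring|]. intros; apply H0; lia.
  - rewrite H0, IH by (auto; lia). ring.
Qed.

Lemma sum_lt_mulr F n u : sum_lt F n * u = sum_lt (fun i => F i * u) n.
Proof. induction n as [|n IH]; simpl; [ring|]. rewrite <- IH; ring. Qed.

Lemma sum_lt_add F G n : sum_lt F n + sum_lt G n = sum_lt (fun i => F i + G i) n.
Proof. induction n as [|n IH]; simpl; [ring|]. rewrite <- IH; ring. Qed.

Definition injective_lt (n : nat) (r : nat -> R) : Prop :=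
  forall j k, (j < n)%nat -> (k < n)%nat -> r j = r k -> j = k.

Lemma psum_ext c c' d x :
  (forall i, (i < d)%nat -> c i = c' i) -> psum c d x = psum c' d x.
Proof.
  induction d as [|d IH]; simpl; intros H; auto.
  rewrite IH by (intros; apply H; lia). rewrite H by lia. auto.
Qed.

Lemma psum_horner c d x : psum c (S d) x = c 0%nat + x * psum (fun i => c (S i)) d x.
Proof. induction d as [|d IH]; simpl in *; [ring|]. rewrite IH; ring. Qed.

Lemma psum_const0 d x : psum (fun _ => 0) d x = 0.
Proof. induction d as [|d IH]; simpl; auto. rewrite IH; ring. Qed.

Lemma psum_scal u c d x : psum (fun i => u * c i) d x = u * psum c d x.
Proof. induction d as [|d IH]; simpl; [ring|]. rewrite IH; ring. Qed.

Lemma psum_opp_var c d x : psum (fun i => - (-1) ^ i * c i) d x = - psum c d (- x).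
Proof.
  induction d as [|d IH]; simpl; [ring|].
  rewrite IH. replace (- x) with (-1 * x) by ring. rewrite Rpow_mult_distr. ring.
Qed.

Lemma poly_lt_ext d p q : poly_lt d p -> (forall x, q x = p x) -> poly_lt d q.
Proof. intros [c Hc] H; exists c; intros x; rewrite H; auto. Qed.

Lemma poly_lt_0 d : poly_lt d (fun _ => 0).
Proof. exists (fun _ => 0); intros; rewrite psum_const0; auto. Qed.

Lemma poly_lt_add d p q :
  poly_lt d p -> poly_lt d q -> poly_lt d (fun x => p x + q x).
Proof.
  intros [c Hc] [e He]. exists (fun i => c i + e i). intros x.
  rewrite Hc, He. clear. induction d as [|d IH]; simpl; [ring|]. rewrite <- IH; ring.
Qed.

Lemma poly_lt_scal d p u : poly_lt d p -> poly_lt d (fun x => u * p x).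
Proof. intros [c Hc]. exists (fun i => u * c i). intros x. rewrite Hc, psum_scal; auto. Qed.

Lemma poly_lt_S d p : poly_lt d p -> poly_lt (S d) p.
Proof.
  intros [c Hc]. exists (fun i => if Nat.ltb i d then c i else 0). intros x.
  rewrite Hc. simpl. rewrite Nat.ltb_irrefl, Rmult_0_l, Rplus_0_r.
  apply psum_ext. intros i Hi. apply Nat.ltb_lt in Hi. rewrite Hi; auto.
Qed.

Lemma poly_lt_horner d r a : poly_lt d r -> poly_lt (S d) (fun s => a + s * r s).
Proof.
  intros [c Hc]. exists (fun i => match i with O => a | S i' => c i' end).
  intros x. rewrite psum_horner, Hc. auto.
Qed.

Lemma poly_lt_horner_inv d p :
  poly_lt (S d) p -> exists a r, poly_lt d r /\ forall s, p s = a + s * r s.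
Proof.
  intros [c Hc]. exists (c 0%nat), (psum (fun i => c (S i)) d). split.
  - exists (fun i => c (S i)); auto.
  - intros s; rewrite Hc, psum_horner; auto.
Qed.

Lemma poly_lt_mul_linear d q u : poly_lt d q -> poly_lt (S d) (fun s => q s * (s - u)).
Proof.
  intros H. apply poly_lt_ext with (fun s => (0 + s * q s) + (- u) * q s).
  - apply poly_lt_add; [apply poly_lt_horner | apply poly_lt_S, poly_lt_scal]; auto.
  - intros; ring.
Qed.

Lemma poly_lt_sum d (F : nat -> R -> R) m :
  (forall i, (i < m)%nat -> poly_lt d (F i)) -> poly_lt d (fun s => sum_lt (fun i => F i s) m).
Proof. induction m as [|m IH]; simpl; intros H; [apply poly_lt_0 | apply poly_lt_add; auto]. Qed.

Lemma poly_lt_factor d p :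
  poly_lt (S d) p -> forall r, exists q, poly_lt d q /\ forall x, p x = p r + (x - r) * q x.
Proof.
  revert p. induction d as [|d IH]; intros p Hp r;
    destruct (poly_lt_horner_inv _ _ Hp) as (a & q0 & Hq0 & Hp0).
  - exists (fun _ => 0). split; [apply poly_lt_0|].
    destruct Hq0 as [c Hc]. intros x. rewrite !Hp0, !Hc. simpl. ring.
  - destruct (IH q0 Hq0 r) as (q & Hq & Eq).
    exists (fun x => q0 x + r * q x). split.
    + apply poly_lt_add; [|apply poly_lt_S, poly_lt_scal]; auto.
    + intros x. rewrite !Hp0, (Eq x). ring.
Qed.

Lemma poly_lt_roots_eq0 d p (r : nat -> R) :
  poly_lt d p -> injective_lt d r -> (forall j, (j < d)%nat -> p (r j) = 0) ->
  forall x, p x = 0.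
Proof.
  revert p. induction d as [|d IH]; intros p Hp Hinj Hr x.
  - destruct Hp as [c Hc]. rewrite Hc; auto.
  - destruct (poly_lt_factor d p Hp (r d)) as (q & Hq & Ep).
    assert (Hq0 : forall x, q x = 0).
    { apply (IH q Hq); [intros j k ? ?; apply Hinj; lia|].
      intros j Hj. assert (Hrj := Hr j ltac:(lia)). rewrite Ep, Hr in Hrj by lia.
      assert (r j - r d <> 0) by (intros E; assert (j = d) by (apply Hinj; lia || lra); lia).
      apply (Rmult_eq_reg_l (r j - r d)); auto. lra. }
    rewrite Ep, Hq0, Hr by lia. ring.
Qed.

(** * Cauchy systems *)

Section CauchySystem.

Variable p : nat -> R.

Fixpoint prod_skip (i m : nat) (t : R) : R :=
  match m with
  | O => 1
  | S m' => if Nat.eqb m' i then prod_skip i m' t else prod_skip i m' t * (t - p m')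
  end.

Fixpoint prod_all (m : nat) (t : R) : R :=
  match m with O => 1 | S m' => prod_all m' t * (t - p m') end.

Lemma prod_skip_full i m t : (m <= i)%nat -> prod_skip i m t = prod_all m t.
Proof.
  induction m as [|m IH]; simpl; intros; auto.
  destruct (Nat.eqb_spec m i); [lia|]. rewrite IH by lia; auto.
Qed.

Lemma prod_all_split i m t : (i < m)%nat -> prod_all m t = (t - p i) * prod_skip i m t.
Proof.
  induction m as [|m IH]; simpl; intros H; [lia|].
  destruct (Nat.eqb_spec m i) as [->|].
  - rewrite prod_skip_full by lia. ring.
  - rewrite IH by lia. ring.
Qed.

Lemma poly_lt_prod_skip_S i m : poly_lt (S m) (prod_skip i m).
Proof.
  induction m as [|m IH]; simpl.
  - exists (fun _ => 1). intros; simpl; ring.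
  - destruct (Nat.eqb m i); [apply poly_lt_S | apply poly_lt_mul_linear]; auto.
Qed.

Lemma poly_lt_prod_skip i m : (i < m)%nat -> poly_lt m (prod_skip i m).
Proof.
  induction m as [|m IH]; simpl; intros H; [lia|].
  destruct (Nat.eqb_spec m i).
  - apply poly_lt_prod_skip_S.
  - apply poly_lt_mul_linear, IH; lia.
Qed.

Lemma prod_skip_root i i0 m :
  (i0 < m)%nat -> i <> i0 -> prod_skip i m (p i0) = 0.
Proof.
  induction m as [|m IH]; simpl; intros H Hne; [lia|].
  destruct (Nat.eqb_spec m i); [apply IH; lia|].
  destruct (Nat.eq_dec m i0) as [->|]; [ring|]. rewrite IH by lia; ring.
Qed.

Lemma prod_skip_neq0 i m :
  (forall l, (l < m)%nat -> l <> i -> p l <> p i) -> prod_skip i m (p i) <> 0.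
Proof.
  induction m as [|m IH]; simpl; intros H; [lra|].
  destruct (Nat.eqb_spec m i); [apply IH; intros; apply H; lia|].
  apply Rmult_integral_contrapositive; split.
  - apply IH; intros; apply H; lia.
  - intros E. apply (H m); [lia | auto | lra].
Qed.

(* A rational function sum_i c_i / (t - p_i) with n distinct poles vanishing
   at n distinct nodes is zero: clearing denominators gives a polynomial of
   degree < n with n roots, whose value at p_i is c_i times a nonzero product. *)
Lemma cauchy_system_eq0 n (s c : nat -> R) :
  injective_lt n p -> injective_lt n s ->
  (forall i j, (i < n)%nat -> (j < n)%nat -> s j <> p i) ->
  (forall j, (j < n)%nat -> sum_lt (fun i => c i / (s j - p i)) n = 0) ->
  forall i, (i < n)%nat -> c i = 0.
Proof.
  intros Hp Hs Hsp Hsys i0 Hi0.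
  set (P := fun t => sum_lt (fun i => c i * prod_skip i n t) n).
  assert (HP : poly_lt n P).
  { apply poly_lt_sum. intros i Hi. apply poly_lt_scal, poly_lt_prod_skip; auto. }
  assert (Hroots : forall j, (j < n)%nat -> P (s j) = 0).
  { intros j Hj. unfold P.
    rewrite <- (Rmult_0_l (prod_all n (s j))), <- (Hsys j Hj), sum_lt_mulr.
    apply sum_lt_ext. intros i Hi. rewrite (prod_all_split i) by auto.
    field. apply Rminus_eq_contra, Hsp; auto. }
  assert (HPi0 := poly_lt_roots_eq0 n P s HP Hs Hroots (p i0)).
  unfold P in HPi0. rewrite (sum_lt_single _ _ i0) in HPi0; auto.
  - apply Rmult_integral in HPi0. destruct HPi0 as [|Hz]; auto.
    exfalso. revert Hz. apply prod_skip_neq0.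
    intros l Hl Hne E. apply Hne, Hp; auto.
  - intros i Hi Hne. rewrite prod_skip_root; auto. ring.
Qed.

End CauchySystem.

(** * Moments of piecewise polynomials on [-1,1] *)

Lemma is_RInt_pow m a b : is_RInt (fun x => x ^ m) a b ((b ^ S m - a ^ S m) / INR (S m)).
Proof.
  assert (Hm : INR (S m) <> 0) by (apply not_0_INR; lia).
  replace ((b ^ S m - a ^ S m) / INR (S m))
    with (minus (b ^ S m / INR (S m)) (a ^ S m / INR (S m)))
    by (unfold minus, plus, opp; simpl; field; auto).
  apply (is_RInt_derive (fun x => x ^ S m / INR (S m))).
  - intros y _. auto_derive; auto. simpl pred. field. auto.
  - intros y _. apply continuity_pt_filterlim, derivable_continuous_pt, derivable_pt_pow.
Qed.

Lemma is_RInt_psum_mul_pow c d k a b :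
  is_RInt (fun x => psum c d x * x ^ k) a b
    (sum_lt (fun i => c i * ((b ^ S (i + k) - a ^ S (i + k)) / INR (S (i + k)))) d).
Proof.
  induction d as [|d IH]; cbn [psum sum_lt].
  - apply is_RInt_ext with (fun _ => 0); [intros; change (@eq R 0 (0 * x ^ k)); ring|].
    assert (H0 := @is_RInt_const R_NormedModule a b zero).
    rewrite (@scal_zero_r R_AbsRing R_NormedModule) in H0. exact H0.
  - apply is_RInt_ext with (fun x => psum c d x * x ^ k + c d * x ^ (d + k)).
    { intros x _. change (@eq R (psum c d x * x ^ k + c d * x ^ (d + k))
                                ((psum c d x + c d * x ^ d) * x ^ k)).
      rewrite pow_add. ring. }
    apply (is_RInt_plus _ _ _ _ _ _ IH (is_RInt_scal _ _ _ (c d) _ (is_RInt_pow (d + k) a b))).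
Qed.

(* The k-th moment on [-1,1] of the function equal to psum a n on (-1,0) and
   to psum b n on (0,1). *)
Definition moment (n : nat) (a b : nat -> R) (k : nat) : R :=
  sum_lt (fun i => (b i + (-1) ^ (i + k) * a i) / INR (S (i + k))) n.

Lemma moment_0 n k : moment n (fun _ => 0) (fun _ => 0) k = 0.
Proof. apply sum_lt_eq0. intros. unfold Rdiv. ring. Qed.

Lemma moment_sub_scal n a b a' b' l k :
  moment n (fun i => a i - l * a' i) (fun i => b i - l * b' i) k
  = moment n a b k - l * moment n a' b' k.
Proof.
  unfold moment. induction n as [|n IH]; cbn [sum_lt]; [ring|].
  rewrite IH. field. apply not_0_INR; lia.
Qed.

Lemma moment_of_integral n g a b k v :
  (forall x, -1 < x < 0 -> g x = psum a n x * x ^ k) ->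
  (forall x, 0 < x < 1 -> g x = psum b n x * x ^ k) ->
  has_integral g (-1) 1 v -> v = moment n a b k.
Proof.
  intros Ha Hb [pr Hv].
  assert (Hg := ex_RInt_Reals_1 _ _ _ pr).
  assert (Hneg : is_RInt g (-1) 0
    (sum_lt (fun i => a i * ((0 ^ S (i + k) - (-1) ^ S (i + k)) / INR (S (i + k)))) n)).
  { apply is_RInt_ext with (fun x => psum a n x * x ^ k); [|apply is_RInt_psum_mul_pow].
    intros x Hx. rewrite Rmin_left, Rmax_right in Hx by lra. symmetry; apply Ha; auto. }
  assert (Hpos : is_RInt g 0 1
    (sum_lt (fun i => b i * ((1 ^ S (i + k) - 0 ^ S (i + k)) / INR (S (i + k)))) n)).
  { apply is_RInt_ext with (fun x => psum b n x * x ^ k); [|apply is_RInt_psum_mul_pow].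
    intros x Hx. rewrite Rmin_left, Rmax_right in Hx by lra. symmetry; apply Hb; auto. }
  assert (Hall := is_RInt_Chasles g (-1) 0 1 _ _ Hneg Hpos).
  rewrite <- Hv, <- (RInt_Reals g (-1) 1 pr).
  rewrite (is_RInt_unique (V := R_CompleteNormedModule) _ _ _ _ Hall).
  unfold moment, plus; simpl. rewrite sum_lt_add. apply sum_lt_ext. intros i _.
  rewrite pow1. field. change (INR (S (i + k)) <> 0). apply not_0_INR; lia.
Qed.

Lemma moment_piecewise n h a b k v :
  (forall x, -1 < x < 0 -> h x = psum a n x) ->
  (forall x, 0 < x < 1 -> h x = psum b n x) ->
  has_integral (fun x => h x * x ^ k) (-1) 1 v -> v = moment n a b k.
Proof.
  intros Ha Hb. apply moment_of_integral; intros x Hx; [rewrite Ha | rewrite Hb]; auto.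
Qed.

(* Moments of even order 2j give a Cauchy system in b_i + (-1)^i a_i with
   nodes 2j, those of odd order 2j+1 one in b_i - (-1)^i a_i with nodes 2j+1;
   the poles are -(i+1) in both cases. *)
Lemma moments_eq0_coef_eq0 n a b :
  (forall k, (k < n + n)%nat -> moment n a b k = 0) ->
  forall i, (i < n)%nat -> a i = 0 /\ b i = 0.
Proof.
  intros Hmom.
  assert (Hcauchy : forall (e : nat) (sg : R),
    (e <= 1)%nat -> sg = (-1) ^ e ->
    forall i, (i < n)%nat -> b i + sg * (-1) ^ i * a i = 0).
  { intros e sg He Hsg.
    apply (cauchy_system_eq0 (fun i => - (INR i + 1)) n (fun j => INR (2 * j + e))).
    - intros j k _ _ E. apply INR_eq. lra.
    - intros j k _ _ E. apply INR_eq in E. lia.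
    - intros i j _ _ E. assert (0 <= INR i) by apply pos_INR.
      assert (0 <= INR (2 * j + e)) by apply pos_INR. lra.
    - intros j Hj. rewrite <- (Hmom (2 * j + e)%nat) by lia. unfold moment.
      apply sum_lt_ext. intros i _. rewrite Hsg, <- pow_add, !pow_add, pow_1_even.
      f_equal; [ring|]. rewrite S_INR, !plus_INR. ring. }
  intros i Hi.
  assert (Heven := Hcauchy 0%nat 1 ltac:(lia) eq_refl i Hi).
  assert (Hodd := Hcauchy 1%nat (-1) ltac:(lia) ltac:(simpl; ring) i Hi).
  assert (Hb : b i = 0) by lra. split; auto.
  assert (Hsgn : (-1) ^ i <> 0) by (apply pow_nonzero; lra).
  apply (Rmult_eq_reg_l ((-1) ^ i)); auto. lra.
Qed.

(* Uniqueness of the type I function up to scaling. *)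
Lemma moments_proportional n a b a' b' :
  (forall k, (k + 2 <= n + n)%nat -> moment n a b k = 0) ->
  (forall k, (k + 2 <= n + n)%nat -> moment n a' b' k = 0) ->
  moment n a' b' (n + n - 1) = 1 ->
  forall i, (i < n)%nat ->
    a i = moment n a b (n + n - 1) * a' i /\ b i = moment n a b (n + n - 1) * b' i.
Proof.
  intros Hab Ha'b' Hlast i Hi.
  enough (H : a i - moment n a b (n + n - 1) * a' i = 0 /\
              b i - moment n a b (n + n - 1) * b' i = 0) by lra.
  revert i Hi. apply moments_eq0_coef_eq0. intros k Hk. rewrite moment_sub_scal.
  destruct (Nat.eq_dec k (n + n - 1)) as [->|Hne].
  - rewrite Hlast. ring.
  - rewrite Hab, Ha'b' by lia. ring.
Qed.

(** * Alpert wavelets and the Legendre-Angelesco function *)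

Lemma chi_on_neg x :
  -1 < x < 0 ->
  chi_cc (-1) 0 x = 1 /\ chi_cc 0 1 x = 0 /\ chi_co (-1) 0 x = 1 /\ chi_co 0 1 x = 0.
Proof.
  intros Hx. unfold chi_cc, chi_co.
  repeat destruct Rle_dec; repeat destruct Rlt_dec; repeat split; lra.
Qed.

Lemma chi_on_pos x :
  0 < x < 1 ->
  chi_cc (-1) 0 x = 0 /\ chi_cc 0 1 x = 1 /\ chi_co (-1) 0 x = 0 /\ chi_co 0 1 x = 1.
Proof.
  intros Hx. unfold chi_cc, chi_co.
  repeat destruct Rle_dec; repeat destruct Rlt_dec; repeat split; lra.
Qed.

Lemma LA_Q_on_neg A B x : -1 < x < 0 -> LA_Q A B x = A x.
Proof. intros Hx. unfold LA_Q. destruct (chi_on_neg x Hx) as (-> & -> & _). ring. Qed.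

Lemma LA_Q_on_pos A B x : 0 < x < 1 -> LA_Q A B x = B x.
Proof. intros Hx. unfold LA_Q. destruct (chi_on_pos x Hx) as (-> & -> & _). ring. Qed.

(* For k = n the parity (-1)^(k+n-1) in (ii) is -1, so f_n is odd. *)
Lemma alpert_last_piecewise n f :
  (1 <= n)%nat -> alpert n f ->
  exists a b, (forall x, -1 < x < 0 -> f n x = psum a n x) /\
              (forall x, 0 < x < 1 -> f n x = psum b n x).
Proof.
  intros Hn (_ & Hpoly & Hsym & _).
  destruct (Hpoly n ltac:(lia)) as (p & [c Hc] & Hp).
  exists (fun i => - (-1) ^ i * c i), c. split.
  - intros x Hx. rewrite psum_opp_var, <- Hc, <- Hp by lra.
    rewrite <- (Ropp_involutive x) at 1. rewrite Hsym by (lia || lra).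
    replace (n + n - 1)%nat with (S (2 * (n - 1))) by lia. rewrite pow_1_odd. ring.
  - intros x Hx. rewrite Hp, Hc by lra; auto.
Qed.

Theorem proposition1 (n : nat) (f : nat -> R -> R) (A B : R -> R) :
  (1 <= n)%nat ->
  alpert n f ->
  typeI_LA n n A B ->
  exists lambda : R, lambda <> 0 /\
    forall x, (-1 < x < 0 \/ 0 < x < 1) ->
      f n x = lambda * (A x * chi_co (-1) 0 x + B x * chi_co 0 1 x).
Proof.
  intros Hn Hf (HA & HB & HQ & HQ1).
  destruct (alpert_last_piecewise n f Hn Hf) as (a & c & Fneg & Fpos).
  destruct Hf as (_ & _ & _ & Horth & Hvan), HA as [al Hal], HB as [be Hbe].
  assert (Qneg : forall x, -1 < x < 0 -> LA_Q A B x = psum al n x)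
    by (intros; rewrite LA_Q_on_neg; auto).
  assert (Qpos : forall x, 0 < x < 1 -> LA_Q A B x = psum be n x)
    by (intros; rewrite LA_Q_on_pos; auto).
  assert (Hcoef := moments_proportional n a c al be
    (fun k Hk => eq_sym (moment_piecewise n _ _ _ _ _ Fneg Fpos (Hvan n k ltac:(lia) Hk)))
    (fun k Hk => eq_sym (moment_piecewise n _ _ _ _ _ Qneg Qpos (HQ k Hk)))
    (eq_sym (moment_piecewise n _ _ _ _ _ Qneg Qpos HQ1))).
  set (l := moment n a c (n + n - 1)) in Hcoef.
  assert (Hfl : forall x, (-1 < x < 0 -> f n x = l * A x) /\ (0 < x < 1 -> f n x = l * B x)).
  { intros x. split; intros Hx; [rewrite Fneg, Hal | rewrite Fpos, Hbe]; auto;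
      rewrite <- psum_scal; apply psum_ext; intros i Hi; apply Hcoef; auto. }
  exists l. split.
  - intros Hl0. assert (Hnorm := Horth n n ltac:(lia) ltac:(lia)).
    rewrite Nat.eqb_refl in Hnorm.
    apply (moment_of_integral n _ (fun _ => 0) (fun _ => 0) 0) in Hnorm.
    + rewrite moment_0 in Hnorm. lra.
    + intros x Hx. rewrite psum_const0, (proj1 (Hfl x)), Hl0 by auto. ring.
    + intros x Hx. rewrite psum_const0, (proj2 (Hfl x)), Hl0 by auto. ring.
  - intros x [Hx|Hx].
    + destruct (chi_on_neg x Hx) as (_ & _ & -> & ->). rewrite (proj1 (Hfl x)) by auto. ring.
    + destruct (chi_on_pos x Hx) as (_ & _ & -> & ->). rewrite (proj2 (Hfl x)) by auto. ring.
Qed.
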